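(* Consider $N$ homogeneous agents $\dot x_i=Ax_i+Bu_i$, $y_i=Cx_i$ ($i=1,\dots,N$), with $x_i\in\mathbb{R}^n$, $u_i\in\mathbb{R}^m$, $y_i\in\mathbb{R}^p$, $(A,B)$ stabilizable and $(C,A)$ detectable, communicating over a weighted directed graph with Laplacian $L=[\ell_{ij}]$, so that agent $i$ receives $\zeta_i=\sum_{j=1}^N a_{ij}(y_i-y_j)=\sum_{j=1}^N\ell_{ij}y_j$. Suppose a (possibly nonlinear, dynamic) protocol is applied, either non-collaborative ($\dot\xi_i=f_i(\xi_i,\zeta_i)$, $u_i=g_i(\xi_i,\zeta_i)$) or collaborative ($\dot x_{i,c}=f(x_{i,c},\zeta_i,\tilde\zeta_i)$, $u_i=g(x_{i,c},\zeta_i,\tilde\zeta_i)$ with $\tilde\zeta_i=\sum_j\ell_{ij}x_{j,c}$), and suppose that it achieves network stability, i.e. for all initial conditions the closed-loop solutions exist on $[0,\infty)$ and $\zeta_i(t)\to0$ as $t\to\infty$ for every $i$ (in the collaborative case additionally $\sum_j a_{ij}(x_{i,c}-x_{j,c})\to0$). Then: (i) if the graph contains a directed spanning tree, the agents achieve output synchronization: $y_i(t)-y_j(t)\to0$ for all $i,j$; (ii) if the graph has no directed spanning tree, so that it has $k>1$ basic bicomponents $\mathcal B_1,\dots,\mathcal B_k$, then for each $i\in\{1,\dots,k\}$ there exists a signal $y_s^i$ such that $y_j(t)-y_s^i(t)\to0$ for every agent $j\in\mathcal B_i$; and for every agent $j$ not belonging to any basic bicomponent there exist coefficients $\beta_{j,1},\dots,\beta_{j,k}\ge0$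 with $\sum_{i=1}^k\beta_{j,i}=1$, depending only on the network (the weights $a_{ij}$) and not on initial conditions, such that $y_j(t)-\sum_{i=1}^k\beta_{j,i}y_s^i(t)\to0$.
   Context: Graph conventions: nodes $\{1,\dots,N\}$, weights $a_{ij}\ge0$, $a_{ii}=0$, and $a_{ij}>0$ means an edge from node $j$ to node $i$ (agent $i$ receives information from agent $j$). The Laplacian is $\ell_{ii}=\sum_{k}a_{ik}$, $\ell_{ij}=-a_{ij}$ for $i\ne j$. A directed spanning tree is a subgraph containing all nodes in which every node except one root has exactly one parent. A basic bicomponent is a maximal strongly connected set of nodes that receives no edges from nodes outside it; after permutation of nodes the Laplacian has the block upper-triangular form with first block row $(L_0, L_{01},\dots,L_{0k})$ and diagonal blocks $L_1,\dots,L_k$ (the Laplacians of the basic bicomponents, each with a simple zero eigenvalue), with all other blocks zero, and $L_0$ (the non-basic nodes) having all eigenvalues in the open right half plane. The number of basic bicomponents equals the multiplicity of the zero eigenvalue of $L$. *)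

From HB Require Import structures.
From mathcomp Require Import all_boot all_order all_algebra.
From mathcomp Require Import all_classical all_reals all_analysis.
From mathcomp Require Import complex.
Set Implicit Arguments. Unset Strict Implicit. Unset Printing Implicit Defensive.
Import Order.TTheory GRing.Theory Num.Theory.
Import numFieldNormedType.Exports.
Local Open Scope ring_scope.
Local Open Scope classical_set_scope.

Section Defs.
Variable R : realType.

(* a i j > 0 : edge from node j to node i (agent i receives from agent j). *)
Definition laplacian (N : nat) (a : 'M[R]_N) : 'M[R]_N :=
  \matrix_(i, j) (if i == j then \sum_(k < N) a i k else - a i j).

Definition gedge (N : nat) (a : 'M[R]_N) : rel 'I_N := fun u v => 0 < a v u.

(* directed spanning tree: a root r and a parent map par such that every
   non-root node i has the tree edge par i -> i in the graph, and following
   parents from any node reaches the root (so the subgraph is a tree). *)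
Definition has_spanning_tree (N : nat) (a : 'M[R]_N) : Prop :=
  exists (r : 'I_N) (par : 'I_N -> 'I_N),
    (forall i, i != r -> 0 < a i (par i)) /\
    (forall i, exists k, iter k par i = r).

Definition strongly_connectedb (N : nat) (a : 'M[R]_N) (S : {set 'I_N}) : bool :=
  [forall i in S, forall j in S, connect (gedge a) i j].

Definition basic_bicomponentb (N : nat) (a : 'M[R]_N) (S : {set 'I_N}) : bool :=
  [&& [exists i, i \in S], strongly_connectedb a S,
      [forall T : {set 'I_N},
         ((S \subset T) && strongly_connectedb a T) ==> (T == S)] &
      [forall i in S, forall j, (j \notin S) ==> (a i j == 0)]].

Definition basic_bicomponents (N : nat) (a : 'M[R]_N) : {set {set 'I_N}} :=
  [set S | basic_bicomponentb a S].

Definition nonbasic (N : nat) (a : 'M[R]_N) (j : 'I_N) : bool :=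
  [forall S in basic_bicomponents a, j \notin S].

Definition hurwitz (n : nat) (M : 'M[R]_n) : Prop :=
  forall z : R[i], root (map_poly (fun x : R => (x%:C)%C) (char_poly M)) z ->
    complex.Re z < 0.

Definition stabilizable (n m : nat) (A : 'M[R]_n) (B : 'M[R]_(n, m)) : Prop :=
  exists F : 'M[R]_(m, n), hurwitz (A + B *m F).

Definition detectable (n p : nat) (C : 'M[R]_(p, n)) (A : 'M[R]_n) : Prop :=
  exists K : 'M[R]_(n, p), hurwitz (A + K *m C).

(* x is a solution on [0, oo) of xdot = dx: right-continuous at 0 and
   differentiable with derivative dx t at every t > 0 (entrywise). *)
Definition deriv_on (k : nat) (x dx : R -> 'cV[R]_k) : Prop :=
  (forall r : 'I_k, (fun s => x s r ord0) @ (0:R)^'+ --> x 0 r ord0) /\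
  (forall t : R, 0 < t -> forall r : 'I_k,
      is_derive (t : R) (1 : R) (fun s => x s r ord0) (dx t r ord0)).

Definition vanishes (k : nat) (f : R -> 'cV[R]_k) : Prop :=
  forall r : 'I_k, (fun t => f t r ord0) @ +oo --> (0 : R).

Definition zeta (N n p : nat) (a : 'M[R]_N) (C : 'M[R]_(p, n))
  (x : 'I_N -> R -> 'cV[R]_n) (i : 'I_N) (t : R) : 'cV[R]_p :=
  \sum_(j < N) laplacian a i j *: (C *m x j t).

Definition nc_solution (N n m p : nat) (a : 'M[R]_N) (A : 'M[R]_n)
  (B : 'M[R]_(n, m)) (C : 'M[R]_(p, n)) (q : 'I_N -> nat)
  (f : forall i, 'cV[R]_(q i) -> 'cV[R]_p -> 'cV[R]_(q i))
  (g : forall i, 'cV[R]_(q i) -> 'cV[R]_p -> 'cV[R]_m)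
  (x : 'I_N -> R -> 'cV[R]_n) (xi : forall i, R -> 'cV[R]_(q i)) : Prop :=
  forall i : 'I_N,
    deriv_on (x i) (fun t => A *m x i t + B *m g i (xi i t) (zeta a C x i t)) /\
    deriv_on (xi i) (fun t => f i (xi i t) (zeta a C x i t)).

Definition nc_network_stable (N n m p : nat) (a : 'M[R]_N) (A : 'M[R]_n)
  (B : 'M[R]_(n, m)) (C : 'M[R]_(p, n)) (q : 'I_N -> nat)
  (f : forall i, 'cV[R]_(q i) -> 'cV[R]_p -> 'cV[R]_(q i))
  (g : forall i, 'cV[R]_(q i) -> 'cV[R]_p -> 'cV[R]_m) : Prop :=
  (forall (x0 : 'I_N -> 'cV[R]_n) (xi0 : forall i, 'cV[R]_(q i)),
     exists x xi, nc_solution a A B C f g x xi /\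
       (forall i, x i 0 = x0 i) /\ (forall i, xi i 0 = xi0 i)) /\
  (forall x xi, nc_solution a A B C f g x xi ->
     forall i, vanishes (zeta a C x i)).

Definition nc_output (N n m p : nat) (a : 'M[R]_N) (A : 'M[R]_n)
  (B : 'M[R]_(n, m)) (C : 'M[R]_(p, n)) (q : 'I_N -> nat)
  (f : forall i, 'cV[R]_(q i) -> 'cV[R]_p -> 'cV[R]_(q i))
  (g : forall i, 'cV[R]_(q i) -> 'cV[R]_p -> 'cV[R]_m)
  (y : 'I_N -> R -> 'cV[R]_p) : Prop :=
  exists x xi, nc_solution a A B C f g x xi /\
    (forall i t, y i t = C *m x i t).

Definition zetat (N q : nat) (a : 'M[R]_N) (xc : 'I_N -> R -> 'cV[R]_q)
  (i : 'I_N) (t : R) : 'cV[R]_q :=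
  \sum_(j < N) laplacian a i j *: xc j t.

Definition c_solution (N n m p q : nat) (a : 'M[R]_N) (A : 'M[R]_n)
  (B : 'M[R]_(n, m)) (C : 'M[R]_(p, n))
  (f : 'cV[R]_q -> 'cV[R]_p -> 'cV[R]_q -> 'cV[R]_q)
  (g : 'cV[R]_q -> 'cV[R]_p -> 'cV[R]_q -> 'cV[R]_m)
  (x : 'I_N -> R -> 'cV[R]_n) (xc : 'I_N -> R -> 'cV[R]_q) : Prop :=
  forall i : 'I_N,
    deriv_on (x i)
      (fun t => A *m x i t + B *m g (xc i t) (zeta a C x i t) (zetat a xc i t)) /\
    deriv_on (xc i) (fun t => f (xc i t) (zeta a C x i t) (zetat a xc i t)).

Definition c_network_stable (N n m p q : nat) (a : 'M[R]_N) (A : 'M[R]_n)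
  (B : 'M[R]_(n, m)) (C : 'M[R]_(p, n))
  (f : 'cV[R]_q -> 'cV[R]_p -> 'cV[R]_q -> 'cV[R]_q)
  (g : 'cV[R]_q -> 'cV[R]_p -> 'cV[R]_q -> 'cV[R]_m) : Prop :=
  (forall (x0 : 'I_N -> 'cV[R]_n) (xc0 : 'I_N -> 'cV[R]_q),
     exists x xc, c_solution a A B C f g x xc /\
       (forall i, x i 0 = x0 i) /\ (forall i, xc i 0 = xc0 i)) /\
  (forall x xc, c_solution a A B C f g x xc ->
     forall i, vanishes (zeta a C x i) /\
       vanishes (fun t => \sum_(j < N) a i j *: (xc i t - xc j t))).

Definition c_output (N n m p q : nat) (a : 'M[R]_N) (A : 'M[R]_n)
  (B : 'M[R]_(n, m)) (C : 'M[R]_(p, n))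
  (f : 'cV[R]_q -> 'cV[R]_p -> 'cV[R]_q -> 'cV[R]_q)
  (g : 'cV[R]_q -> 'cV[R]_p -> 'cV[R]_q -> 'cV[R]_m)
  (y : 'I_N -> R -> 'cV[R]_p) : Prop :=
  exists x xc, c_solution a A B C f g x xc /\
    (forall i t, y i t = C *m x i t).

Definition stable_protocol_output (N n m p : nat) (a : 'M[R]_N)
  (A : 'M[R]_n) (B : 'M[R]_(n, m)) (C : 'M[R]_(p, n))
  (y : 'I_N -> R -> 'cV[R]_p) : Prop :=
  (exists (q : 'I_N -> nat)
          (f : forall i, 'cV[R]_(q i) -> 'cV[R]_p -> 'cV[R]_(q i))
          (g : forall i, 'cV[R]_(q i) -> 'cV[R]_p -> 'cV[R]_m),
      nc_network_stable a A B C f g /\ nc_output a A B C f g y) \/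
  (exists (q : nat)
          (f : 'cV[R]_q -> 'cV[R]_p -> 'cV[R]_q -> 'cV[R]_q)
          (g : 'cV[R]_q -> 'cV[R]_p -> 'cV[R]_q -> 'cV[R]_m),
      c_network_stable a A B C f g /\ c_output a A B C f g y).

End Defs.

From HB Require Import structures.
From mathcomp Require Import all_boot all_order all_algebra.
From mathcomp Require Import all_classical all_reals all_analysis.
From mathcomp Require Import complex ring.
Import Order.TTheory GRing.Theory Num.Theory.
Import numFieldNormedType.Exports.
Local Open Scope ring_scope.

(* The relative outputs are zeta = L y, so network stability says L y(t) -> 0.
   Let X be a set of nodes from which every node can be reached.  By the
   discrete minimum principle a function w with (L w)_i = 0 for all i outside X
   attains its minimum on X; hence the Dirichlet operator
   w |-> (w on X, L w off X) is injective, thus invertible, and any signal w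
   vanishing on X is a fixed linear combination of the entries of L w, so it
   tends to 0 whenever L w does.  With a spanning tree, take X = {root} and
   w = y - y_root.  Otherwise take for X one representative per basic
   bicomponent and w = y - sum_S beta_S y_(rep S), where beta_S is the solution
   of the Dirichlet problem with boundary values the indicator of S on the
   basic nodes; L beta_S = 0 everywhere, so L w = L y, and the minimum principle
   gives beta_S >= 0 and sum_S beta_S = 1. *)

Lemma cvg_lincomb0 (R : realType) (I : finType) (f : I -> R -> R) (c : I -> R) :
  (forall k, (f k @ +oo --> (0 : R))%classic) ->
  ((fun t => \sum_k f k t * c k) @ +oo --> (0 : R))%classic.
Proof.
move=> f0; rewrite [X in (_ --> X)%classic](_ : _ = \sum_k 0 * c k).
  by apply: (cvg_big add_continuous) => k _; exact: cvgMl.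
by rewrite big1 // => k _; rewrite mul0r.
Qed.

Lemma sum_scale_coord (R : ringType) (I : finType) (P : pred I) (k : I -> R) p
    (v : I -> 'cV[R]_p) c :
  (\sum_(s | P s) k s *: v s) c ord0 = \sum_(s | P s) k s * v s c ord0.
Proof. by rewrite summxE; apply: eq_bigr => s _; rewrite mxE. Qed.

Section Laplacian.
Context {R : realType} {N : nat} (a : 'M[R]_N).
Hypotheses (a_ge0 : forall i j, 0 <= a i j) (a_diag0 : forall i, a i i = 0).

Definition lapl (w : 'I_N -> R) i := \sum_j a i j * (w i - w j).

Lemma laplacianE w i : \sum_j laplacian a i j * w j = lapl w i.
Proof.
rewrite /lapl (bigD1 i) //= mxE eqxx.
under eq_bigr => j /negbTE ji do rewrite mxE eq_sym ji mulNr.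
under [RHS]eq_bigr do rewrite mulrBr.
by rewrite sumrB -mulr_suml sumrN [X in _ = _ - X](bigD1 i) //= a_diag0 mul0r add0r.
Qed.

Lemma lapl_sub w1 w2 i : lapl (fun k => w1 k - w2 k) i = lapl w1 i - lapl w2 i.
Proof. by rewrite /lapl -sumrB; apply: eq_bigr => j _; ring. Qed.

Lemma lapl_cst c i : lapl (fun=> c) i = 0.
Proof. by rewrite /lapl big1 // => j _; rewrite subrr mulr0. Qed.

Lemma lapl_opp w i : lapl (fun k => - w k) i = - lapl w i.
Proof. by rewrite /lapl -sumrN; apply: eq_bigr => j _; ring. Qed.

Lemma lapl_sum (I : finType) (P : pred I) (w : I -> 'I_N -> R) (c : I -> R) i :
  lapl (fun k => \sum_(s | P s) w s k * c s) i = \sum_(s | P s) lapl (w s) i * c s.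
Proof.
rewrite /lapl; under [RHS]eq_bigr do rewrite mulr_suml.
rewrite exchange_big; apply: eq_bigr => j _.
by rewrite -sumrB mulr_sumr; apply: eq_bigr => s _; ring.
Qed.

Lemma lapl_eq0_const w i : (forall j, 0 < a i j -> w j = w i) -> lapl w i = 0.
Proof.
move=> wi; rewrite /lapl big1 // => j _.
have [aij|] := ltP 0 (a i j); first by rewrite wi // subrr mulr0.
by rewrite le_eqVlt ltNge a_ge0 orbF => /eqP ->; rewrite mul0r.
Qed.

Lemma lapl_min_spread w i j :
  lapl w i = 0 -> (forall k, w i <= w k) -> 0 < a i j -> w j = w i.
Proof.
move=> /eqP; rewrite -oppr_eq0 /lapl -sumrN => /eqP sum0 wmin aij.
have terms_ge0 k : true -> 0 <= - (a i k * (w i - w k)).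
  by move=> _; rewrite -mulrN opprB mulr_ge0 // subr_ge0.
have /eqP := @psumr_eq0P _ _ _ _ terms_ge0 sum0 j isT.
by rewrite -mulrN opprB mulf_eq0 gt_eqF //= subr_eq0 => /eqP.
Qed.

Definition reachable_from (X : {set 'I_N}) :=
  forall i, exists2 r, r \in X & connect (gedge a) r i.

Section DirichletProblem.
Variable X : {set 'I_N}.

Definition dirichlet (w : 'I_N -> R) i := if i \in X then w i else lapl w i.

Definition dirichlet_mx : 'M[R]_N :=
  \matrix_(k, i) (if i \in X then (k == i)%:R else laplacian a i k).

Definition dirichlet_solve (b : 'I_N -> R) j : R :=
  (\row_k b k *m invmx dirichlet_mx) 0 j.

End DirichletProblem.

Section MinimumPrinciple.
Context {X : {set 'I_N}}.
Hypothesis X_reach : reachable_from X.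
Local Notation dirichlet := (dirichlet X).
Local Notation dirichlet_mx := (dirichlet_mx X).
Local Notation dirichlet_solve := (dirichlet_solve X).

Lemma harmonic_min w : (forall i, i \notin X -> lapl w i = 0) ->
  forall j, exists2 r, r \in X & w r <= w j.
Proof.
move=> harm j; have [i0 _ i0_min] := @arg_minP _ _ _ j xpredT w isT.
have {}i0_min k : w i0 <= w k by exact: i0_min.
(* Walking back along a path from X to the minimiser i0, the minimum spreads to
   in-neighbours until the path meets X. *)
suff: forall p u, path (gedge a) u p -> w (last u p) = w i0 ->
    w u = w i0 \/ exists2 r, r \in X & w r = w i0.
  have [r rX /connectP[p rp i0p]] := X_reach i0.
  move=> /(_ p r rp); rewrite -i0p => /(_ erefl) [wr|[r' r'X wr']].
    by exists r; rewrite // wr.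
  by exists r'; rewrite // wr'.
elim=> [|x p IH] u /=; first by left.
move=> /andP[ux px] /(IH x px) [wx|]; last by right.
have [xX|xX] := boolP (x \in X); first by right; exists x.
left; rewrite -wx; apply: lapl_min_spread => //; first exact: harm.
by move=> k; rewrite wx.
Qed.

Lemma harmonic_ge0 w : (forall i, i \notin X -> lapl w i = 0) ->
  (forall r, r \in X -> 0 <= w r) -> forall j, 0 <= w j.
Proof.
by move=> harm w0 j; have [r /w0 wr0 /(le_trans wr0)] := @harmonic_min w harm j.
Qed.

Lemma dirichlet_eq0 w : (forall i, dirichlet w i = 0) -> forall j, w j = 0.
Proof.
move=> w0 j; have harm i : i \notin X -> lapl w i = 0.
  by move=> iX; have := w0 i; rewrite /dirichlet (negbTE iX).
have onX r : r \in X -> w r = 0 by move=> rX; have := w0 r; rewrite /dirichlet rX.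
have harmN i : i \notin X -> lapl (fun k => - w k) i = 0.
  by move=> iX; rewrite lapl_opp harm ?oppr0.
apply/le_anti; rewrite (@harmonic_ge0 w) // => [|r /onX ->//].
by rewrite -oppr_ge0 (@harmonic_ge0 _ harmN) // => r /onX ->; rewrite oppr0.
Qed.

Lemma dirichlet_mxE (v : 'rV[R]_N) i :
  (v *m dirichlet_mx) 0 i = dirichlet (fun k => v 0 k) i.
Proof.
rewrite mxE /dirichlet; case: ifP => iX; last first.
  by rewrite -laplacianE; apply: eq_bigr => k _; rewrite mxE iX mulrC.
rewrite (bigD1 i) //= mxE iX eqxx mulr1 big1 ?addr0 // => k /negbTE ki.
by rewrite mxE iX ki mulr0.
Qed.

Lemma dirichlet_mx_unit : dirichlet_mx \in unitmx.
Proof.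
rewrite -row_free_unit; apply: inj_row_free => v v0; apply/rowP => j.
rewrite mxE; apply: dirichlet_eq0 => i.
by rewrite -dirichlet_mxE v0 mxE.
Qed.

Lemma dirichlet_solveK b i : dirichlet (dirichlet_solve b) i = b i.
Proof.
rewrite -[dirichlet_solve b]/(fun k => _ 0 k) -dirichlet_mxE.
by rewrite mulmxKV ?dirichlet_mx_unit // mxE.
Qed.

Lemma dirichletK w j : dirichlet_solve (dirichlet w) j = w j.
Proof.
rewrite /dirichlet_solve.
have -> : \row_k dirichlet w k = \row_k w k *m dirichlet_mx.
  apply/rowP => k; rewrite dirichlet_mxE mxE.
  by congr dirichlet; apply/funext => l; rewrite mxE.
by rewrite mulmxK ?dirichlet_mx_unit // mxE.
Qed.

Lemma lapl_vanishing (w : 'I_N -> R -> R) :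
  (forall i, i \notin X -> ((fun t => lapl (w^~ t) i) @ +oo --> (0 : R))%classic) ->
  (forall r t, r \in X -> w r t = 0) ->
  forall j, (w j @ +oo --> (0 : R))%classic.
Proof.
move=> lapl0 onX j.
have -> : w j = fun t => \sum_k dirichlet (w^~ t) k * invmx dirichlet_mx k j.
  apply/funext => t; rewrite -(dirichletK (w^~ t)) /dirichlet_solve mxE.
  by under eq_bigr do rewrite mxE.
apply: cvg_lincomb0 => k; rewrite /dirichlet.
have [kX|kX] := boolP (k \in X); last exact: lapl0.
by under eq_cvg do rewrite onX //; exact: cvg_cst.
Qed.

End MinimumPrinciple.

Definition ancestors j := [set u | connect (gedge a) u j].

Lemma source_ancestor i : exists2 j, connect (gedge a) j i &
  forall u, connect (gedge a) u j -> connect (gedge a) j u.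
Proof.
have [n] := ubnP #|ancestors i|; elim: n i => // n IH i; rewrite ltnS => size_anc.
have [src|] := boolP [forall u, connect (gedge a) u i ==> connect (gedge a) i u].
  by exists i => // u; move/forallP/(_ u)/implyP: src.
case/forallPn => u; rewrite negb_imply => /andP[ui iu].
have anc_lt : ancestors u \proper ancestors i.
  apply/properP; split; last by exists i; rewrite !inE ?connect0.
  by apply/fintype.subsetP => v; rewrite !inE => /connect_trans; apply.
have [j ju j_src] := IH u (leq_trans (proper_card anc_lt) size_anc).
by exists j => //; exact: connect_trans ju ui.
Qed.

Lemma ancestors_source_basic {j : 'I_N} :
  (forall u, connect (gedge a) u j -> connect (gedge a) j u) ->
  ancestors j \in basic_bicomponents a.
Proof.
move=> j_src; rewrite inE; apply/and4P; split.
- by apply/existsP; exists j; rewrite inE connect0.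
- apply/forall_inP => u; rewrite inE => uj; apply/forall_inP => v; rewrite inE => vj.
  exact: connect_trans uj (j_src _ vj).
- apply/forallP => T; apply/implyP => /andP[sub_T /forall_inP T_sc].
  rewrite finset.eqEsubset sub_T andbT; apply/fintype.subsetP => v vT; rewrite inE.
  have jT : j \in T by apply: (fintype.subsetP sub_T); rewrite inE connect0.
  by have /forall_inP := T_sc v vT; apply.
- apply/forall_inP => i; rewrite inE => ij; apply/forallP => k; apply/implyP.
  rewrite inE eq_le a_ge0 andbT leNgt; apply: contra => aik.
  by apply: connect_trans ij; apply: connect1.
Qed.

Lemma basic_bicomponent_eq {S T : {set 'I_N}} {u : 'I_N} : S \in basic_bicomponents a ->
  T \in basic_bicomponents a -> u \in S -> u \in T -> S = T.
Proof.
rewrite !inE => /and4P[_ S_sc S_max _] /and4P[_ T_sc T_max _] uS uT.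
have sc X : strongly_connectedb a X -> u \in X -> forall v, v \in X ->
    connect (gedge a) u v && connect (gedge a) v u.
  move=> /forall_inP X_sc uX v vX.
  by rewrite (forall_inP (X_sc u uX)) ?(forall_inP (X_sc v vX)).
have ST_sc : strongly_connectedb a (S :|: T).
  apply/forall_inP => v vST; apply/forall_inP => w wST; apply: (@connect_trans _ _ u).
    by case/finset.setUP: vST => [/(sc _ S_sc uS)|/(sc _ T_sc uT)] /andP[].
  by case/finset.setUP: wST => [/(sc _ S_sc uS)|/(sc _ T_sc uT)] /andP[].
move/forallP: S_max => /(_ (S :|: T)); rewrite finset.subsetUl ST_sc => /eqP <-.
by move/forallP: T_max => /(_ (S :|: T)); rewrite finset.subsetUr ST_sc => /eqP.
Qed.

Lemma basic_in_edge {T : {set 'I_N}} {i j : 'I_N} :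
  T \in basic_bicomponents a -> i \in T -> 0 < a i j -> j \in T.
Proof.
rewrite inE => /and4P[_ _ _ /forall_inP no_in] iT; apply: contraTT => jT.
by move/forallP/(_ j)/implyP/(_ jT)/eqP: (no_in i iT) ->; rewrite ltxx.
Qed.

Lemma basicP j :
  reflect (exists2 T, T \in basic_bicomponents a & j \in T) (~~ nonbasic a j).
Proof.
apply: (iffP forall_inPn) => [[T TB]|[T TB jT]]; first by rewrite negbK; exists T.
by exists T; rewrite ?negbK.
Qed.

Lemma reachable_from_bicomponents (X : {set 'I_N}) :
  (forall S, S \in basic_bicomponents a -> exists2 r, r \in X & r \in S) ->
  reachable_from X.
Proof.
move=> meets i; have [j ji j_src] := source_ancestor i.
have [r rX] := meets _ (ancestors_source_basic j_src).
by rewrite inE => rj; exists r => //; exact: connect_trans rj ji.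
Qed.

Section RootedSpanningTree.
Variable r : 'I_N.
Hypothesis r_root : forall i, connect (gedge a) r i.

Definition walk_to i k :=
  [exists p : k.-tuple 'I_N, path (gedge a) r p && (last r p == i)].

Lemma walk_to_exists i : exists k, walk_to i k.
Proof.
have [p rp ip] := connectP (r_root i).
by exists (size p); apply/existsP; exists (in_tuple p); rewrite rp ip eqxx.
Qed.

Definition depth i := ex_minn (walk_to_exists i).

Lemma shallower_in_neighbour {i : 'I_N} :
  i != r -> exists2 j, 0 < a i j & (depth j < depth i)%N.
Proof.
rewrite {2}/depth; case: ex_minnP => k /existsP[[s /eqP sz] /= /andP[rs /eqP si]] _ ir.
case/lastP: s sz rs si => [|q x] sz; first by move=> _ ri; rewrite -ri eqxx in ir.
rewrite rcons_path last_rcons size_rcons in sz * => /andP[rq qx] xi.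
exists (last r q); first by rewrite -xi.
rewrite /depth; case: ex_minnP => d _ /(_ (size q)); rewrite -sz ltnS; apply.
by apply/existsP; exists (in_tuple q); rewrite rq eqxx.
Qed.

Definition parent i := odflt r [pick j | (0 < a i j) && (depth j < depth i)%N].

Lemma parent_edge {i : 'I_N} :
  i != r -> 0 < a i (parent i) /\ (depth (parent i) < depth i)%N.
Proof.
move=> ir; rewrite /parent; case: pickP => [j /andP[]//|none].
by have [j aij dj] := shallower_in_neighbour ir; move: (none j); rewrite aij dj.
Qed.

Lemma iter_parent_root i : exists k, iter k parent i = r.
Proof.
have [n] := ubnP (depth i); elim: n i => // n IH i; rewrite ltnS => di.
have [->|ir] := eqVneq i r; first by exists 0%N.
have [_ dp] := parent_edge ir; have [k pk] := IH (parent i) (leq_trans dp di).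
by exists k.+1; rewrite iterSr.
Qed.

Lemma spanning_tree_of_root : has_spanning_tree a.
Proof. by exists r, parent; split=> [i /parent_edge[]|]; last exact: iter_parent_root. Qed.

End RootedSpanningTree.

Lemma spanning_tree_reachable : has_spanning_tree a -> exists r, reachable_from [set r].
Proof.
move=> [r [par [par_edge par_root]]]; exists r => i; exists r; rewrite ?inE //.
have [k kr] := par_root i.
suff: connect (gedge a) (iter k par i) i \/ connect (gedge a) r i by rewrite kr; case.
elim: k {kr} => [|k [IH|]]; [by left | | by right].
have [<-|kr] := eqVneq (iter k par i) r; first by right.
by left; rewrite iterS; apply: connect_trans IH; apply: connect1; exact: par_edge.
Qed.

Lemma card_basic_gt1 (i0 : 'I_N) :
  ~ has_spanning_tree a -> (1 < #|basic_bicomponents a|)%N.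
Proof.
move=> notree; rewrite ltnNge; apply/negP => /card_le1_eqP basic_eq; apply: notree.
have [j0 _ j0_src] := source_ancestor i0; apply: (@spanning_tree_of_root j0) => i.
have [j ji j_src] := source_ancestor i.
have : j0 \in ancestors j.
  have [j0B jB] := (ancestors_source_basic j0_src, ancestors_source_basic j_src).
  by rewrite (basic_eq _ _ j0B jB) inE connect0.
by rewrite inE => /connect_trans; apply.
Qed.

Section Representatives.
Variable i0 : 'I_N.

Definition rep (S : {set 'I_N}) := odflt i0 [pick x in S].

Lemma rep_in {S : {set 'I_N}} : S \in basic_bicomponents a -> rep S \in S.
Proof.
rewrite inE => /and4P[/existsP[x xS] _ _ _]; rewrite /rep.
by case: pickP => [//|/(_ x)]; rewrite xS.
Qed.

Lemma reachable_from_reps : reachable_from [set rep S | S in basic_bicomponents a].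
Proof.
apply: reachable_from_bicomponents => S SB; exists (rep S); last exact: rep_in.
by apply/imsetP; exists S.
Qed.

End Representatives.

Definition basic_nodes := [set j | ~~ nonbasic a j].

Lemma reachable_from_basic : reachable_from basic_nodes.
Proof.
apply: reachable_from_bicomponents => S SB.
have := SB; rewrite inE => /and4P[/existsP[r rS] _ _ _].
by exists r; rewrite // inE; apply/basicP; exists S.
Qed.

Definition beta (S : {set 'I_N}) j : R :=
  dirichlet_solve basic_nodes (fun k => (k \in S)%:R) j.

Lemma beta_dirichlet S i : dirichlet basic_nodes (beta S) i = (i \in S)%:R.
Proof. exact: (dirichlet_solveK reachable_from_basic). Qed.

Lemma beta_basic S j : ~~ nonbasic a j -> beta S j = (j \in S)%:R.
Proof. by move=> jb; have := beta_dirichlet S j; rewrite /dirichlet inE jb. Qed.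

Lemma lapl_beta S i : S \in basic_bicomponents a -> lapl (beta S) i = 0.
Proof.
move=> SB; have [ib|/basicP[T TB iT]] := boolP (nonbasic a i).
  have := beta_dirichlet S i; rewrite /dirichlet inE ib /= => ->.
  by case: (boolP (i \in S)) => // iS; move/basicP: ib; case; exists S.
have Tb k : k \in T -> ~~ nonbasic a k by move=> kT; apply/basicP; exists T.
apply: lapl_eq0_const => j /(basic_in_edge TB iT) jT.
rewrite !beta_basic ?Tb //; case: (boolP (i \in S)) => iS.
  by rewrite (basic_bicomponent_eq SB TB iS iT) jT.
apply/eqP; rewrite pnatr_eq0 eqb0; apply: contra iS => jS.
by rewrite (basic_bicomponent_eq SB TB jS jT).
Qed.

Lemma beta_ge0 S j : S \in basic_bicomponents a -> 0 <= beta S j.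
Proof.
move=> SB; apply: (harmonic_ge0 reachable_from_basic) => [i _|r]; first exact: lapl_beta.
by rewrite inE => /beta_basic ->.
Qed.

Lemma sum_beta_basic (f : {set 'I_N} -> R) {T : {set 'I_N}} {j : 'I_N} :
  T \in basic_bicomponents a -> j \in T ->
  \sum_(S in basic_bicomponents a) beta S j * f S = f T.
Proof.
move=> TB jT; have jb : ~~ nonbasic a j by apply/basicP; exists T.
rewrite (bigD1 T) //= beta_basic // jT mul1r big1 ?addr0 // => S /andP[SB ST].
rewrite beta_basic //; case: (boolP (j \in S)) => [jS|]; last by rewrite mul0r.
by rewrite (basic_bicomponent_eq SB TB jS jT) eqxx in ST.
Qed.

Lemma sum_beta j : \sum_(S in basic_bicomponents a) beta S j = 1.
Proof.
pose w k := 1 - \sum_(S in basic_bicomponents a) beta S k * 1.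
suff: w j = 0.
  by rewrite /w; under eq_bigr do rewrite mulr1; move/eqP; rewrite subr_eq0 => /eqP.
apply: (dirichlet_eq0 reachable_from_basic) => i; rewrite /dirichlet /w inE.
have [ib|/basicP[T TB iT]] := boolP (nonbasic a i) => /=.
  by rewrite lapl_sub lapl_cst lapl_sum big1 ?subrr // => S SB; rewrite lapl_beta ?mul0r.
by rewrite (sum_beta_basic (fun=> 1) TB iT) subrr.
Qed.

Lemma laplacian_coord p (y : 'I_N -> 'cV[R]_p) i c :
  (\sum_j laplacian a i j *: y j) c ord0 = lapl (fun k => y k c ord0) i.
Proof. by rewrite sum_scale_coord laplacianE. Qed.

Definition zeta_vanishes {p} (y : 'I_N -> R -> 'cV[R]_p) :=
  forall i, vanishes (fun t => \sum_j laplacian a i j *: y j t).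

Lemma stable_protocol_zeta_vanishes n m p (A : 'M[R]_n) (B : 'M[R]_(n, m))
    (C : 'M[R]_(p, n)) (y : 'I_N -> R -> 'cV[R]_p) :
  stable_protocol_output a A B C y -> zeta_vanishes y.
Proof.
have zetaE (x : 'I_N -> R -> 'cV[R]_n) i : (forall i t, y i t = C *m x i t) ->
    zeta a C x i = fun t => \sum_j laplacian a i j *: y j t.
  by move=> yx; apply/funext => t; apply: eq_bigr => j _; rewrite yx.
case=> [[q [f [g [[_ stable] [x [xi [sol yx]]]]]]] |
        [q [f [g [[_ stable] [x [xc [sol yx]]]]]]]] i.
  by rewrite -(zetaE x) //; exact: stable x xi sol i.
by rewrite -(zetaE x) //; exact: (stable x xc sol i).1.
Qed.

Lemma zeta_vanishes_lapl p (y : 'I_N -> R -> 'cV[R]_p) : zeta_vanishes y ->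
  forall i c, ((fun t => lapl (fun k => y k t c ord0) i) @ +oo --> (0 : R))%classic.
Proof. by move=> y0 i c; have := y0 i c; under eq_fun do rewrite laplacian_coord. Qed.

Lemma sync_of_root {p} {y : 'I_N -> R -> 'cV[R]_p} {r : 'I_N} :
  reachable_from [set r] -> zeta_vanishes y ->
  forall i j, vanishes (fun t => y i t - y j t).
Proof.
move=> r_reach /zeta_vanishes_lapl y0 i j c.
pose w k t := y k t c ord0 - y r t c ord0.
have w0 k : (w k @ +oo --> (0 : R))%classic.
  apply: (lapl_vanishing r_reach) => [l _|_ t /set1P ->]; last exact: subrr.
  by under eq_fun do rewrite lapl_sub lapl_cst subr0; exact: y0.
have -> : (fun t => (y i t - y j t) c ord0) = fun t => w i t - w j t.
  by apply/funext => t; rewrite /w !mxE; ring.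
by rewrite -(subr0 0); exact: cvgB.
Qed.

Lemma sync_of_bicomponents {p} {y : 'I_N -> R -> 'cV[R]_p} (i0 : 'I_N) :
  zeta_vanishes y -> forall j, vanishes (fun t =>
    y j t - \sum_(S in basic_bicomponents a) beta S j *: y (rep i0 S) t).
Proof.
move=> /zeta_vanishes_lapl y0 j c.
pose w k t := y k t c ord0 -
  \sum_(S in basic_bicomponents a) beta S k * y (rep i0 S) t c ord0.
have -> : (fun t => (y j t -
    \sum_(S in basic_bicomponents a) beta S j *: y (rep i0 S) t) c ord0) = w j.
  by apply/funext => t; rewrite !mxE sum_scale_coord.
have lapl_w k t : lapl (w^~ t) k = lapl (fun l => y l t c ord0) k.
  by rewrite lapl_sub lapl_sum big1 ?subr0 // => S SB; rewrite lapl_beta ?mul0r.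
apply: (lapl_vanishing (reachable_from_reps i0)) => [k _|_ t /imsetP[T TB ->]].
  by under eq_fun do rewrite lapl_w; exact: y0.
by rewrite /w (sum_beta_basic (fun S => y (rep i0 S) t c ord0) TB (rep_in i0 TB)) subrr.
Qed.

Lemma sync_within_bicomponent {p} {y : 'I_N -> R -> 'cV[R]_p} (i0 : 'I_N) S j :
  zeta_vanishes y -> S \in basic_bicomponents a -> j \in S ->
  vanishes (fun t => y j t - y (rep i0 S) t).
Proof.
move=> y0 SB jS c.
suff -> : (fun t => (y j t - y (rep i0 S) t) c ord0) =
    fun t => (y j t - \sum_(T in basic_bicomponents a) beta T j *: y (rep i0 T) t) c ord0.
  exact: sync_of_bicomponents.
apply/funext => t; rewrite !mxE sum_scale_coord.
by rewrite (sum_beta_basic (fun T => y (rep i0 T) t c ord0) SB jS).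
Qed.

End Laplacian.

Theorem lemma1 (R : realType) (N : nat) (a : 'M[R]_N)
  (HN : (0 < N)%N)
  (Ha_nonneg : forall i j, 0 <= a i j) (Ha_diag : forall i, a i i = 0) :
  (has_spanning_tree a ->
     forall (n m p : nat) (A : 'M[R]_n) (B : 'M[R]_(n, m)) (C : 'M[R]_(p, n)),
       stabilizable A B -> detectable C A ->
       forall y : 'I_N -> R -> 'cV[R]_p, stable_protocol_output a A B C y ->
       forall i j : 'I_N, vanishes (fun t => y i t - y j t)) /\
  (~ has_spanning_tree a ->
     (1 < #|basic_bicomponents a|)%N /\
     exists beta : {set 'I_N} -> 'I_N -> R,
       (forall S j, S \in basic_bicomponents a -> nonbasic a j -> 0 <= beta S j) /\
       (forall j, nonbasic a j -> \sum_(S in basic_bicomponents a) beta S j = 1) /\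
       forall (n m p : nat) (A : 'M[R]_n) (B : 'M[R]_(n, m)) (C : 'M[R]_(p, n)),
         stabilizable A B -> detectable C A ->
         forall y : 'I_N -> R -> 'cV[R]_p, stable_protocol_output a A B C y ->
         exists ys : {set 'I_N} -> R -> 'cV[R]_p,
           (forall S j, S \in basic_bicomponents a -> j \in S ->
              vanishes (fun t => y j t - ys S t)) /\
           (forall j, nonbasic a j ->
              vanishes (fun t => y j t -
                          \sum_(S in basic_bicomponents a) beta S j *: ys S t))).
Proof.
split=> [tree n m p A B C _ _ y /(stable_protocol_zeta_vanishes a) y0 | notree].
  have [r r_reach] := spanning_tree_reachable a tree.
  exact: (sync_of_root a Ha_nonneg Ha_diag r_reach y0).
pose i0 := Ordinal HN.
split; first exact: card_basic_gt1 a Ha_nonneg i0 notree.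
exists (beta a); split; first by move=> S j SB _; exact: beta_ge0.
split; first by move=> j _; exact: sum_beta.
move=> n m p A B C _ _ y /(stable_protocol_zeta_vanishes a) y0.
exists (fun S => y (rep i0 S)); split=> [S j|j _].
  exact: (sync_within_bicomponent a Ha_nonneg Ha_diag i0 S j y0).
exact: (sync_of_bicomponents a Ha_nonneg Ha_diag i0 y0).
Qed.
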